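(* Let $n\in\mathbb{N}$ and $m\geq 3$. Then \[ p'_{e,m}(n) -p'_{o,m}(n) = \begin{cases} (-1)^k, &\text{if } n=P_{m+2,k}\text{ or }n=Q_{m+2,k}\text{ for some }k\in\mathbb{N}, \\ 0, & \text{otherwise,} \end{cases} \] where $P_{m+2,k}=\frac{k(mk-(m-2))}{2}$ and $Q_{m+2,k}=\frac{k(mk+(m-2))}{2}$.
   Context: For $m\ge3$, $p'_{e,m}(n)$ (resp. $p'_{o,m}(n)$) is the number of partitions of $n$ into an even (resp. odd) number of distinct parts, each part being congruent to $0$, $1$ or $m-1$ modulo $m$. *)

From mathcomp Require Import all_boot all_order all_algebra.
Set Implicit Arguments. Unset Strict Implicit. Unset Printing Implicit Defensive.
Import GRing.Theory Num.Theory.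

Definition allowed_part (m k : nat) : bool :=
  (0 < k) && [|| k %% m == 0, k %% m == 1 | k %% m == m - 1].

(* Partitions of n into distinct parts = finite sets S of positive integers
   (all <= n, encoded in 'I_n.+1) whose elements sum to n. *)
Definition dist_parts (m n : nat) : {set {set 'I_n.+1}} :=
  [set S : {set 'I_n.+1} |
     (\sum_(i in S) (i : nat) == n) && [forall i in S, allowed_part m i]].

Definition p_even (m n : nat) : nat := #|[set S in dist_parts m n | ~~ odd #|S|]|.
Definition p_odd (m n : nat) : nat := #|[set S in dist_parts m n | odd #|S|]|.

Definition Ppoly (m k : nat) : nat := (k * (m * k - (m - 2))) %/ 2.
Definition Qpoly (m k : nat) : nat := (k * (m * k + (m - 2))) %/ 2.

(* p'_{e,m}(n) - p'_{o,m}(n) is the coefficient of x^n in the product of the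
   factors 1 - x^i over the allowed parts i <= n.  Modulo x^(n+1) that product
   equals (x^m; x^m)_{2n} * prod_{i<n} (1 - x^(mi+1)) (1 - x^(mi+m-1)), and the
   q-binomial theorem with q = x^m expands the last product (a finite Jacobi
   triple product) as sum_{k <= 2n} (-1)^(k-n) x^(e_k) [2n, k]_q, where e_k is
   P_{m+2,k-n} for k >= n and Q_{m+2,n-k} for k < n.  Since
   (q; q)_{2n} [2n, k]_q = 1 modulo q^(min(k, 2n-k)+1), which is invisible at
   x^n, and the e_k are pairwise distinct, the coefficient of x^n is
   (-1)^(k-n) when n = e_k and 0 when n is no e_k. *)

From mathcomp Require Import all_boot all_order all_algebra.
From mathcomp Require Import ring zify.
Set Implicit Arguments. Unset Strict Implicit. Unset Printing Implicit Defensive.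
Import GRing.Theory Num.Theory.

Lemma bin2S n : 'C(n.+1, 2) = 'C(n, 2) + n.
Proof. by rewrite binS bin1. Qed.

Lemma mul2_bin2 n : 2 * 'C(n, 2) = n * n.-1.
Proof. by rewrite -mul_bin_diag bin1. Qed.

Lemma bin2D a b : 'C(a + b, 2) = 'C(a, 2) + a * b + 'C(b, 2).
Proof.
elim: b => [|b IH]; first by rewrite addn0 muln0 bin0n; lia.
by rewrite addnS !bin2S IH; lia.
Qed.

Definition pentP m a := m * 'C(a, 2) + a.
Definition pentQ m a := m * 'C(a, 2) + (m - 1) * a.

(* The exponent of x in the term of index k, i.e. of j = k - N in [-N, N],
   of the finite triple product. *)
Definition jacobi_exp m N k :=
  if N <= k then pentP m (k - N) else pentQ m (N - k).

Lemma PpolyE m k : 2 <= m -> Ppoly m k = pentP m k.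
Proof.
move=> m2; rewrite /Ppoly -[pentP m k](@mulnK _ 2) //; congr (_ %/ 2).
by rewrite /pentP; have := mul2_bin2 k; case: k => [|k] /= h; nia.
Qed.

Lemma QpolyE m k : 2 <= m -> Qpoly m k = pentQ m k.
Proof.
move=> m2; rewrite /Qpoly -[pentQ m k](@mulnK _ 2) //; congr (_ %/ 2).
by rewrite /pentQ; have := mul2_bin2 k; case: k => [|k] /= h; nia.
Qed.

Lemma pentP_homo m : {homo pentP m : a b / a < b}.
Proof. by apply: homo_ltn ltn_trans _ => a; rewrite /pentP bin2S; nia. Qed.

Lemma pentP_inj m : injective (pentP m).
Proof. exact/incn_inj/leq_mono/pentP_homo. Qed.

Lemma pentQ_homo m : 2 <= m -> {homo pentQ m : a b / a < b}.
Proof. by move=> m2; apply: homo_ltn ltn_trans _ => a; rewrite /pentQ bin2S; nia. Qed.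

Lemma pentQ_inj m : 2 <= m -> injective (pentQ m).
Proof. by move=> m2; apply/incn_inj/leq_mono/pentQ_homo. Qed.

Lemma pentQ_between m b : 3 <= m -> 0 < b -> pentP m b < pentQ m b < pentP m b.+1.
Proof. by move=> m3 b0; rewrite /pentP /pentQ bin2S; apply/andP; split; nia. Qed.

Lemma pentP_neq_pentQ m a b : 3 <= m -> 0 < b -> pentP m a != pentQ m b.
Proof.
move=> m3 b0; have /andP[ltPQ ltQP] := pentQ_between m3 b0.
have Pmono := leq_mono (pentP_homo m).
rewrite neq_ltn; case: (leqP a b) => [le_ab | lt_ba].
  by rewrite (leq_ltn_trans _ ltPQ) ?Pmono.
by rewrite (leq_trans ltQP) ?Pmono ?orbT.
Qed.

Lemma jacobi_exp_inj m N : 3 <= m -> injective (jacobi_exp m N).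
Proof.
move=> m3 k1 k2; rewrite /jacobi_exp.
case: (leqP N k1) => h1; case: (leqP N k2) => h2.
- by move/pentP_inj; lia.
- by move/eqP; rewrite (negbTE (pentP_neq_pentQ _ m3 _)) // subn_gt0.
- by move/esym/eqP; rewrite (negbTE (pentP_neq_pentQ _ m3 _)) // subn_gt0.
- by move/(pentQ_inj (ltnW m3)); lia.
Qed.

Lemma leq_pentP m a : a <= pentP m a.
Proof. exact: leq_addl. Qed.

Lemma leq_pentQ m a : 2 <= m -> a <= pentQ m a.
Proof. by move=> m2; rewrite /pentQ (leq_trans _ (leq_addl _ _)) // leq_pmull // subn_gt0. Qed.

Lemma jacobi_exp_pentP m n j : n = pentP m j -> jacobi_exp m n (n + j) = n.
Proof. by move=> nE; rewrite /jacobi_exp leq_addr addKn -nE. Qed.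

Lemma jacobi_exp_pentQ m n j : 2 <= m -> n = pentQ m j -> jacobi_exp m n (n - j) = n.
Proof.
move=> m2 nE; rewrite /jacobi_exp; case: j nE => [|j] nE.
  by rewrite subn0 leqnn subnn nE /pentP /pentQ /= !muln0.
have le_jn : j < n by rewrite nE (leq_pentQ _ m2).
by rewrite leqNgt ltn_subrL (leq_ltn_trans _ le_jn) //= subKn // ltnW.
Qed.

Lemma jacobi_exp_eqP m n k : jacobi_exp m n k = n ->
  (exists j, n = pentP m j) \/ (exists j, n = pentQ m j).
Proof.
by rewrite /jacobi_exp; case: leqP => _ nE; [left; exists (k - n) | right; exists (n - k)].
Qed.

Lemma jacobi_exp_bound m N k : 2 <= m -> k <= N + N ->
  N < jacobi_exp m N k + m * (minn k (N + N - k)).+1.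
Proof.
move=> m2 le_k2N; have le_mul x : x <= m * x by rewrite leq_pmull // ltnW.
rewrite /jacobi_exp; case: (leqP N k) => h.
  have := leq_pentP m (k - N); have := le_mul (N + N - k).+1; lia.
have := leq_pentQ (N - k) m2; have := le_mul k.+1; lia.
Qed.

Lemma jacobi_exp_shift m N k : 0 < m -> k <= N + N ->
  m * 'C(k, 2) + (m * N - 1) * (N + N - k) =
  m * 'C(N, 2) + (m * N - 1) * N + jacobi_exp m N k.
Proof.
move=> m0 le_k2N; case: N le_k2N => [|N] le_k2N.
  have -> : k = 0 by lia.
  by rewrite /jacobi_exp /pentP !muln0.
have [t mN] : exists t, m * N.+1 = t.+1.
  by exists (m * N.+1).-1; rewrite prednK // muln_gt0 m0.
rewrite mN subn1 /= /jacobi_exp /pentP /pentQ.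
case: (leqP N.+1 k) => [le_Nk | lt_kN].
  rewrite -(subnKC le_Nk) bin2D addKn; set j := k - N.+1.
  have : t * (N.+1 - j) + t * j = t * N.+1 by rewrite -mulnDr subnK //; lia.
  have : m * (N.+1 * j) = t * j + j by rewrite mulnA mN mulSn addnC.
  rewrite !mulnDr; lia.
have [j eN] : exists j, N.+1 = k + j.+1 by exists (N - k); lia.
rewrite eN in mN *; rewrite addKn bin2D.
have := mul2_bin2 j.+1; have := congr1 (muln^~ j.+1) mN; rewrite /=.
have : (m - 1) * j.+1 + j.+1 = m * j.+1 by rewrite -mulSnr subn1 prednK.
lia.
Qed.

Lemma allowed_part_block m N r : 0 < r <= m ->
  allowed_part m (m * N + r) = [|| r == 1, r == m - 1 | r == m].
Proof.
move=> /andP[r0 le_rm]; rewrite /allowed_part addn_gt0 r0 orbT /= mulnC modnMDl.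
case: (ltngtP r m) le_rm => // [lt_rm _ | ->]; last by rewrite modnn eqxx !orbT.
by rewrite modn_small // orbF (gtn_eqF r0).
Qed.

Local Open Scope ring_scope.

Section QBinomial.
Variables (R : comRingType) (q : R).

Fixpoint qbin (n k : nat) : R :=
  match n, k with
  | 0, 0 => 1
  | 0, _.+1 => 0
  | _.+1, 0 => 1
  | n'.+1, k'.+1 => qbin n' k'.+1 + q ^+ (n' - k') * qbin n' k'
  end.

Definition qpoch n : R := \prod_(i < n) (1 - q ^+ i.+1).

Lemma qbin0 n : qbin n 0 = 1. Proof. by case: n. Qed.

Lemma qbinSS n k : qbin n.+1 k.+1 = qbin n k.+1 + q ^+ (n - k) * qbin n k.
Proof. by []. Qed.

Lemma qbin_small n k : (n < k)%N -> qbin n k = 0.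
Proof. by elim: n k => [|n IH] [|k] //= lt_nk; rewrite !IH ?mulr0 ?addr0 // ltnW. Qed.

Lemma qbinn n : qbin n n = 1.
Proof. by elim: n => //= n ->; rewrite qbin_small // subnn mulr1 add0r. Qed.

Lemma qpochS n : qpoch n.+1 = qpoch n * (1 - q ^+ n.+1).
Proof. by rewrite /qpoch big_ord_recr. Qed.

Lemma qbin_fact n k : (k <= n)%N -> qpoch k * qpoch (n - k) * qbin n k = qpoch n.
Proof.
elim: n k => [|n IH] [|k] le_kn.
- by rewrite /qpoch !big_ord0 !mulr1.
- by [].
- by rewrite qbin0 subn0 /qpoch big_ord0 !mul1r mulr1.
move: le_kn; rewrite ltnS leq_eqVlt => /orP[/eqP ->|lt_kn].
  by rewrite qbinn subnn /qpoch big_ord0 !mulr1.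
have nk : (n - k = (n - k.+1).+1)%N by rewrite subnSK.
have qnk : q ^+ (n - k) * q ^+ k.+1 = q ^+ n.+1 by rewrite -exprD; congr (_ ^+ _); lia.
have splitS : qpoch n * (1 - q ^+ n.+1) =
    qpoch n * (1 - q ^+ (n - k)) + q ^+ (n - k) * (1 - q ^+ k.+1) * qpoch n.
  by rewrite -qnk; ring.
rewrite subSS qbinSS (qpochS n) splitS -{1}(IH _ lt_kn) -(IH _ (ltnW lt_kn)).
by rewrite nk !qpochS -nk; ring.
Qed.

Lemma qbinomial n (y w : R) :
  \prod_(i < n) (y + w * q ^+ i) =
  \sum_(k < n.+1) q ^+ 'C(k, 2) * qbin n k * w ^+ k * y ^+ (n - k).
Proof.
elim: n => [|n IH]; first by rewrite big_ord0 big_ord1 /= !mulr1.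
rewrite big_ord_recr /= IH mulrDr !big_distrl /= [RHS]big_ord_recl /=.
rewrite ?qbin0 subn0 bin0n expr0 !mulr1 !mul1r.
under [in RHS]eq_bigr => k _ do rewrite /bump leq0n add1n add0n mulrDr !mulrDl.
rewrite big_split /= addrA; congr (_ + _).
  rewrite big_ord_recl /= bin0n ?qbin0 subn0 expr0 !mulr1 !mul1r -exprSr; congr (_ + _).
  rewrite [RHS]big_ord_recr /= qbin_small // !mulr0 !mul0r addr0.
  apply: eq_bigr => k _; rewrite /bump /= add1n subSS.
  have -> : (n - k = (n - k.+1).+1)%N by rewrite subnSK.
  by rewrite (exprSr y) !mulrA.
apply: eq_bigr => k _; rewrite subSS bin2S exprD exprS.
have -> : q ^+ n = q ^+ (n - k) * q ^+ k by rewrite -exprD subnK // -ltnS.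
ring.
Qed.

End QBinomial.

Section CongruenceModXn.
Variable R : comRingType.
Implicit Types (T : nat) (p q r : {poly R}).

Definition eqmodX T p q := exists s, p = q + 'X^T * s.

Lemma eqmodX_refl T p : eqmodX T p p.
Proof. by exists 0; rewrite mulr0 addr0. Qed.

Lemma eqmodX_sym T p q : eqmodX T p q -> eqmodX T q p.
Proof. by move=> [s ->]; exists (- s); ring. Qed.

Lemma eqmodX_trans T p q r : eqmodX T p q -> eqmodX T q r -> eqmodX T p r.
Proof. by move=> [s ->] [u ->]; exists (u + s); ring. Qed.

Lemma eqmodXD T p p' q q' :
  eqmodX T p p' -> eqmodX T q q' -> eqmodX T (p + q) (p' + q').
Proof. by move=> [s ->] [u ->]; exists (s + u); ring. Qed.

Lemma eqmodXM T p p' q q' :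
  eqmodX T p p' -> eqmodX T q q' -> eqmodX T (p * q) (p' * q').
Proof. by move=> [s ->] [u ->]; exists (s * q' + p' * u + 'X^T * s * u); ring. Qed.

Lemma eqmodX_leq T T' p q : (T' <= T)%N -> eqmodX T p q -> eqmodX T' p q.
Proof. by move=> le_T [s ->]; exists ('X^(T - T') * s); rewrite mulrA -exprD subnKC. Qed.

Lemma eqmodX_mulXn e T p q : eqmodX T p q -> eqmodX (e + T) ('X^e * p) ('X^e * q).
Proof. by move=> [s ->]; exists s; rewrite exprD; ring. Qed.

Lemma eqmodX_1subXn T e : (T <= e)%N -> eqmodX T (1 - 'X^e) 1.
Proof. by move=> le_Te; exists (- 'X^(e - T)); rewrite mulrN -exprD subnKC. Qed.

Lemma eqmodX_prod1 T (I : Type) (s : seq I) (P : pred I) (F : I -> {poly R}) :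
  (forall i, P i -> eqmodX T (F i) 1) -> eqmodX T (\prod_(i <- s | P i) F i) 1.
Proof.
move=> F1; apply: (big_ind (fun p => eqmodX T p 1)) => //; first exact: eqmodX_refl.
by move=> p q p1 q1; rewrite -[X in eqmodX _ _ X](mulr1 1); apply: eqmodXM.
Qed.

Lemma eqmodX_sum T (I : Type) (s : seq I) (P : pred I) (F G : I -> {poly R}) :
  (forall i, P i -> eqmodX T (F i) (G i)) ->
  eqmodX T (\sum_(i <- s | P i) F i) (\sum_(i <- s | P i) G i).
Proof.
move=> FG; apply: (big_ind2 (eqmodX T)) => //; first exact: eqmodX_refl.
by move=> *; apply: eqmodXD.
Qed.

Lemma coef_eqmodX T p q n : eqmodX T p q -> (n < T)%N -> p`_n = q`_n.
Proof. by move=> [s ->] lt_nT; rewrite coefD coefXnM lt_nT addr0. Qed.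

End CongruenceModXn.

Lemma coef_signXn (R : ringType) (k e j : nat) :
  ((-1) ^+ k * 'X^e : {poly R})`_j = if e == j then (-1) ^+ k else 0.
Proof.
rewrite -signr_odd mulr_sign -[in RHS]signr_odd eq_sym.
by case: odd; rewrite ?coefN coefXn; case: eqP; rewrite ?oppr0.
Qed.

Lemma coef_prod_1subXn (R : comRingType) n (P : pred 'I_n.+1) j :
  (\prod_(i < n.+1 | P i) (1 - 'X^i : {poly R}))`_j =
  \sum_(S : {set 'I_n.+1} | (\sum_(i in S) (i : nat) == j) && [forall i in S, P i])
     (-1) ^+ #|S|.
Proof.
pose F i : {poly R} := if P i then - 'X^i else 0.
have -> : \prod_(i < n.+1 | P i) (1 - 'X^i : {poly R}) = \prod_i (F i + 1).
  by rewrite big_mkcond; apply: eq_bigr => i _; rewrite /F; case: ifP; rewrite ?add0r // addrC.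
rewrite bigA_distr coef_sum [RHS]big_mkcond /=; apply: eq_big => // S _.
rewrite -big_mkcond /=; have [allP | /forall_inPn[i iS notPi]] := boolP [forall i in S, P i].
  have -> : \prod_(i in S) F i = (-1) ^+ #|S| * 'X^(\sum_(i in S) (i : nat)).
    by rewrite -prodrXr -prodrN; apply: eq_bigr => i iS; rewrite /F (forall_inP allP i iS).
  by rewrite coef_signXn andbT.
by rewrite andbF (bigD1 i iS) /= /F (negbTE notPi) mul0r coef0.
Qed.

Lemma sum_sign_dist_parts m n :
  \sum_(S in dist_parts m n) (-1) ^+ #|S| = (p_even m n)%:Z - (p_odd m n)%:Z.
Proof.
rewrite (bigID (fun S : {set 'I_n.+1} => odd #|S|)) /= addrC /p_even /p_odd -!sum1_card.
rewrite -!natz !natr_sum -sumrN; congr (_ + _); apply: eq_big => S; rewrite ?inE //.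
- by move=> /andP[_ /negbTE even_S]; rewrite -signr_odd even_S.
- by move=> /andP[_ odd_S]; rewrite -signr_odd odd_S.
Qed.

Lemma coef_allowed_prod m n :
  (\prod_(i < n.+1 | allowed_part m i) (1 - 'X^i : {poly int}))`_n =
  (p_even m n)%:Z - (p_odd m n)%:Z.
Proof. by rewrite coef_prod_1subXn -sum_sign_dist_parts; apply: eq_bigl => S; rewrite inE. Qed.

Section AllowedProduct.
Variable R : comRingType.

Lemma prod_allowed_block m N : (3 <= m)%N ->
  \prod_((m * N).+1 <= i < (m * N.+1).+1 | allowed_part m i) (1 - 'X^i : {poly R}) =
  (1 - 'X^(m * N + 1)) * (1 - 'X^(m * N + m - 1)) * (1 - 'X^(m * N + m)).
Proof.
move=> m3; have allowedE := @allowed_part_block m N.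
have eN : (m * N.+1 = (m * N + m - 1).+1)%N by rewrite mulnS; lia.
rewrite big_mkcond big_ltn ?eN ?big_nat_recr /=; try lia.
rewrite big1_seq ?mul1r => [|i /andP[_]]; last first.
  rewrite mem_index_iota => /andP[lt_mNi lt_i]; rewrite -(subnKC (ltnW (ltnW lt_mNi))).
  by rewrite allowedE; [case: ifP => //; case/or3P => /eqP; lia | lia].
have -> : (m * N + m - 1 = m * N + (m - 1))%N by lia.
have -> : ((m * N + (m - 1)).+1 = m * N + m)%N by lia.
by rewrite -addn1 !allowedE ?eqxx ?orbT ?mulrA //; lia.
Qed.

Lemma prod_allowed m N : (3 <= m)%N ->
  \prod_(0 <= i < (m * N).+1 | allowed_part m i) (1 - 'X^i : {poly R}) =
  \prod_(i < N) ((1 - 'X^(m * i + 1)) * (1 - 'X^(m * i + m - 1)) * (1 - 'X^(m * i + m))).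
Proof.
move=> m3; elim: N => [|N IH]; first by rewrite muln0 big_ord0 big_mkcond big_nat1.
rewrite big_ord_recr -IH -prod_allowed_block // -big_cat_nat //.
by rewrite ltnS leq_mul2l leqnSn orbT.
Qed.

End AllowedProduct.

Lemma signr_addnn (R : ringType) k N : (-1) ^+ (k + (N + N)) = (-1) ^+ k :> R.
Proof. by rewrite -signr_odd oddD addnn odd_double addbF signr_odd. Qed.

Section FiniteJacobi.
Variable R : idomainType.
Local Notation qXn m := ('X^m : {poly R}).
Local Notation jacobi_prod m N :=
  (\prod_(i < N) ((1 - 'X^(m * i + m - 1)) * (1 - 'X^(m * i + 1))) : {poly R}).

Lemma qpoch_XnE m n : qpoch (qXn m) n = \prod_(0 <= i < n) (1 - 'X^(m * i.+1)).
Proof. by rewrite /qpoch big_mkord; apply: eq_bigr => i _; rewrite exprM. Qed.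

Lemma qpoch_Xn_split m k n : (k <= n)%N ->
  qpoch (qXn m) n = qpoch (qXn m) k * \prod_(k <= i < n) (1 - 'X^(m * i.+1)).
Proof. by move=> le_kn; rewrite !qpoch_XnE -big_cat_nat. Qed.

Lemma qpoch_Xn_neq0 m n : (0 < m)%N -> qpoch (qXn m) n != 0.
Proof.
move=> m0; apply/prodf_neq0 => i _; rewrite -exprM.
apply/eqP => /(congr1 (coefp 0)) /eqP.
by rewrite /= coefB coef1 coefXn coef0 eqxx (@ltn_eqF 0) ?muln_gt0 ?m0 // subr0 oner_eq0.
Qed.

Lemma qpoch_qbin_eqmodX m n k : (0 < m)%N -> (k <= n)%N ->
  eqmodX (m * (minn k (n - k)).+1) (qpoch (qXn m) n * qbin (qXn m) n k) 1.
Proof.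
move=> m0 le_kn.
have top : qpoch (qXn m) k * qbin (qXn m) n k = \prod_(n - k <= i < n) (1 - 'X^(m * i.+1)).
  apply: (mulfI (qpoch_Xn_neq0 (n - k) m0)).
  by rewrite mulrA [_ * qpoch _ k]mulrC qbin_fact // -qpoch_Xn_split // leq_subr.
rewrite (qpoch_Xn_split m le_kn) mulrAC top -[X in eqmodX _ _ X](mulr1 1).
apply: eqmodXM; rewrite big_nat_cond; apply: eqmodX_prod1 => i /andP[/andP[lo _] _];
  by apply: eqmodX_1subXn; rewrite leq_pmul2l //; lia.
Qed.

Lemma prod_lower_half m N : (0 < m)%N ->
  \prod_(i < N) ('X^(m * N - 1) - qXn m ^+ i) =
  (-1) ^+ N * 'X^(m * 'C(N, 2)) * \prod_(i < N) (1 - 'X^(m * i + m - 1)).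
Proof.
move=> m0; rewrite (reindex_inj rev_ord_inj) /=.
have factorE (i : 'I_N) : 'X^(m * N - 1) - qXn m ^+ (N - i.+1) =
    - 'X^(m * (N - i.+1)) * (1 - 'X^(m * i + m - 1)).
  have lt_iN := ltn_ord i.
  have -> : (m * N - 1 = m * (N - i.+1) + (m * i + m - 1))%N.
    by rewrite addnBA ?addn_gt0 ?m0 ?orbT // -mulnSr -mulnDr subnK.
  by rewrite -exprM exprD; ring.
rewrite (eq_bigr _ (fun i _ => factorE i)) big_split /= prodrN card_ord prodrXr.
congr (_ * 'X^_ * _); rewrite -big_distrr /= -bin2_sum big_mkord.
congr (_ * _); rewrite (reindex_inj rev_ord_inj); apply: eq_bigr => i _ /=.
by have := ltn_ord i; lia.
Qed.

Lemma prod_upper_half m N : (0 < m)%N ->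
  \prod_(i < N) ('X^(m * N - 1) - qXn m ^+ (N + i)) =
  'X^((m * N - 1) * N) * \prod_(i < N) (1 - 'X^(m * i + 1)).
Proof.
move=> m0; have -> : 'X^((m * N - 1) * N) = \prod_(i < N) qXn (m * N - 1).
  by rewrite prodr_const card_ord exprM.
rewrite -big_split /=; apply: eq_bigr => i _; rewrite -exprM.
have -> : (m * (N + i) = m * N - 1 + (m * i + 1))%N.
  have : (0 < N)%N by case: N i => [[]|].
  nia.
by rewrite exprD; ring.
Qed.

Lemma prod_jacobi_finite m N : (0 < m)%N ->
  jacobi_prod m N =
  \sum_(k < (N + N).+1) (-1) ^+ (k + N) * 'X^(jacobi_exp m N k) * qbin (qXn m) (N + N) k.
Proof.
move=> m0; set E := (m * 'C(N, 2) + (m * N - 1) * N)%N.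
have c_neq0 : (-1) ^+ N * 'X^E != 0 :> {poly R}.
  by rewrite mulf_neq0 ?signr_eq0 ?monic_neq0 ?monicXn.
(* Multiplied by (-1)^N x^E, both sides become the q-binomial expansion of
   prod_{i < 2N} (x^(mN-1) - x^(mi)). *)
apply: (mulfI c_neq0); rewrite big_distrr /=.
transitivity (\prod_(i < N + N) ('X^(m * N - 1) - qXn m ^+ i)).
  by rewrite big_split_ord /= prod_lower_half // prod_upper_half // big_split /= exprD; ring.
rewrite (eq_bigr (fun i : 'I_(N + N) => 'X^(m * N - 1) + (-1) * qXn m ^+ i));
  last by move=> i _; rewrite mulN1r.
rewrite qbinomial; apply: eq_bigr => k _; have le_k2N : (k <= N + N)%N by rewrite -ltnS.
have expE : 'X^E * 'X^(jacobi_exp m N k) =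
    qXn m ^+ 'C(k, 2) * 'X^(m * N - 1) ^+ (N + N - k) :> {poly R}.
  by rewrite -!exprM -!exprD jacobi_exp_shift.
have signE : (-1) ^+ k = (-1) ^+ N * (-1) ^+ (k + N) :> {poly R}.
  by rewrite -exprD addnCA signr_addnn.
transitivity (qbin (qXn m) (N + N) k * (-1) ^+ k *
  (qXn m ^+ 'C(k, 2) * 'X^(m * N - 1) ^+ (N + N - k))); first by ring.
by rewrite signE -expE; ring.
Qed.

Lemma allowed_prod_eqmodX_qpoch m n : (3 <= m)%N ->
  eqmodX n.+1 (\prod_(i < n.+1 | allowed_part m i) (1 - 'X^i : {poly R}))
    (qpoch (qXn m) (n + n) * jacobi_prod m n).
Proof.
move=> m3; have le_n_mn : (n.+1 <= (m * n).+1)%N by rewrite ltnS leq_pmull //; lia.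
have highE : qpoch (qXn m) n * jacobi_prod m n =
    \prod_(i < n) ((1 - 'X^(m * i + 1)) * (1 - 'X^(m * i + m - 1)) * (1 - 'X^(m * i + m))).
  rewrite qpoch_XnE big_mkord -big_split; apply: eq_bigr => i _ /=.
  by rewrite mulnSr; ring.
apply: eqmodX_trans (_ : eqmodX _ _ (\prod_(0 <= i < (m * n).+1 | allowed_part m i) (1 - 'X^i))) _.
  rewrite (big_cat_nat _ le_n_mn) //= big_mkord -[X in eqmodX _ X _]mulr1.
  apply/eqmodXM/eqmodX_sym; first exact: eqmodX_refl.
  rewrite big_nat_cond; apply: eqmodX_prod1 => i /andP[/andP[lo _] _].
  exact: eqmodX_1subXn.
rewrite prod_allowed // -highE (qpoch_Xn_split m (leq_addr n n)) -mulrA.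
apply: eqmodXM; first exact: eqmodX_refl.
rewrite -[X in eqmodX _ X _]mul1r; apply: eqmodXM; last exact: eqmodX_refl.
apply/eqmodX_sym; rewrite big_nat_cond; apply: eqmodX_prod1 => i /andP[/andP[lo _] _].
by apply: eqmodX_1subXn; rewrite (leq_trans _ (leq_pmull _ _)) ?ltnS //; lia.
Qed.

Lemma qpoch_jacobi_eqmodX m n : (3 <= m)%N ->
  eqmodX n.+1 (qpoch (qXn m) (n + n) * jacobi_prod m n)
    (\sum_(k < (n + n).+1) (-1) ^+ (k + n) * 'X^(jacobi_exp m n k)).
Proof.
move=> m3; have m0 : (0 < m)%N by lia.
rewrite prod_jacobi_finite // big_distrr /=; apply: eqmodX_sum => k _.
have le_k2n : (k <= n + n)%N by rewrite -ltnS.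
have trunc : eqmodX n.+1
    ('X^(jacobi_exp m n k) * (qpoch (qXn m) (n + n) * qbin (qXn m) (n + n) k))
    'X^(jacobi_exp m n k).
  rewrite -[X in eqmodX _ _ X]mulr1.
  apply: (eqmodX_leq (jacobi_exp_bound (ltnW m3) le_k2n)).
  exact/eqmodX_mulXn/qpoch_qbin_eqmodX.
by rewrite mulrCA -mulrA; apply: eqmodXM trunc; apply: eqmodX_refl.
Qed.

Lemma allowed_prod_eqmodX m n : (3 <= m)%N ->
  eqmodX n.+1 (\prod_(i < n.+1 | allowed_part m i) (1 - 'X^i : {poly R}))
    (\sum_(k < (n + n).+1) (-1) ^+ (k + n) * 'X^(jacobi_exp m n k)).
Proof.
by move=> m3; apply: eqmodX_trans (allowed_prod_eqmodX_qpoch _ m3) (qpoch_jacobi_eqmodX _ m3).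
Qed.

End FiniteJacobi.

Lemma p_even_sub_odd m n : (3 <= m)%N ->
  (p_even m n)%:Z - (p_odd m n)%:Z =
  \sum_(k < (n + n).+1 | jacobi_exp m n k == n) (-1) ^+ (k + n).
Proof.
move=> m3; rewrite -coef_allowed_prod (coef_eqmodX (allowed_prod_eqmodX _ n m3)) //.
by rewrite coef_sum [RHS]big_mkcond; apply: eq_bigr => k _; rewrite coef_signXn.
Qed.

Lemma sum_jacobi_exp_fiber m n j : (3 <= m)%N -> (j <= n + n)%N -> jacobi_exp m n j = n ->
  \sum_(k < (n + n).+1 | jacobi_exp m n k == n) (-1) ^+ (k + n) = (-1) ^+ (j + n) :> int.
Proof.
move=> m3 le_j2n jE; rewrite (big_pred1 (Ordinal (le_j2n : j < (n + n).+1)%N)) // => k /=.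
apply/eqP/eqP => [kE | -> //]; apply/val_inj/(@jacobi_exp_inj m n) => //=.
by rewrite kE jE.
Qed.

Theorem theorem2p7 (m n : nat) (hm : (3 <= m)%N) :
  (forall k : nat, (n = Ppoly m k \/ n = Qpoly m k) ->
     (p_even m n)%:Z - (p_odd m n)%:Z = (-1) ^+ k) /\
  ((forall k : nat, n <> Ppoly m k /\ n <> Qpoly m k) ->
     (p_even m n)%:Z - (p_odd m n)%:Z = 0).
Proof.
have m2 : (2 <= m)%N by exact: ltnW.
rewrite p_even_sub_odd //; split=> [k [nP | nQ] | notPQ].
- rewrite PpolyE // in nP; have le_kn : (k <= n)%N by rewrite nP leq_pentP.
  rewrite (sum_jacobi_exp_fiber (j := n + k)) ?jacobi_exp_pentP //; last by lia.
  by rewrite addnAC addnC signr_addnn.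
- rewrite QpolyE // in nQ; have le_kn : (k <= n)%N by rewrite nQ leq_pentQ.
  rewrite (sum_jacobi_exp_fiber (j := n - k)) ?jacobi_exp_pentQ //; last by lia.
  have -> : (n - k + n = k + (n - k) + (n - k))%N by lia.
  by rewrite -addnA signr_addnn.
- rewrite big_pred0 // => k; apply/negbTE/eqP => /jacobi_exp_eqP[[j nE] | [j nE]].
  + by apply: (notPQ j).1; rewrite PpolyE.
  + by apply: (notPQ j).2; rewrite QpolyE.
Qed.
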